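(* In any execution of $\mathtt{search}(\mathcal{G},T)$ (defined in the context), let $\mathcal{G}'$ be the current subgame with top priority $p$, $\alpha\equiv p\pmod 2$, and let $(Z,\sigma)=\mathit{TAttr}^{\mathcal{G}',T'}_\alpha(\mathrm{pr}^{-1}(p)\cap V')$ be the computed region and strategy. Then from every vertex $v\in Z$, player $\overline{\alpha}$ can reach a vertex of priority $p$ via a path in $\mathcal{G}'$ that lies entirely in $Z$ and is consistent with $\sigma$.
   Context: Parity games: $\mathcal{G}=(V_0,V_1,E,\mathrm{pr})$, $V=V_0\cup V_1$ finite, partitioned into vertices of Even ($0$) and Odd ($1$); $E\subseteq V\times V$ with every vertex having a successor; $\mathrm{pr}:V\to\{0,\dots,d\}$. $E(u)=\{v:(u,v)\in E\}$, $\mathrm{pr}(U)=\max_{u\in U}\mathrm{pr}(u)$, $\mathrm{pr}^{-1}(p)$ the set of vertices of priority $p$, $\overline{\alpha}=1-\alpha$. A cycle is won by $\alpha$ if its highest priority has parity $\alpha$. A strategy of $\alpha$ is a partial function $\sigma$ on $V_\alpha$ with $\sigma(v)\in E(v)$; a path is consistent with $\sigma$ if every vertex $v\in\mathrm{dom}(\sigma)$ on it (other than the last) is followed by $\sigma(v)$. For $U\subseteq V$, $\mathcal{G}\cap U$ is the subgame with vertices $V\cap U$ and edges $E\cap(U\times U)$, and $\mathcal{G}\setminus U=\mathcal{G}\cap(V\setminus U)$. A $p$-tangle is a nonempty $U\subseteq V$ with $p=\mathrm{pr}(U)$ such that for $\alpha\equiv p\pmod 2$ there is a strategy $\sigma:U\cap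 V_\alpha\to U$ (witness strategy $\sigma_T(U)$) with $(U,E\cap(\sigma\cup((U\cap V_{\overline{\alpha}})\times U)))$ strongly connected and all its cycles won by $\alpha$ (''won by $\alpha$''). For a tangle $t$ won by $\alpha$ in a game with edge set $E$, $E_T(t)=\{v\notin t:\exists u\in t\cap V_{\overline{\alpha}},(u,v)\in E\}$. $T_\alpha$ denotes the tangles of $T$ won by $\alpha$; for a subgame $\mathcal{G}'$, $T\cap\mathcal{G}'$ denotes the tangles of $T$ contained in its vertex set. Tangle attractor: for a game $\mathcal{G}$ with vertices $V$, tangles $T$, player $\alpha$ and $A\subseteq V$, $\mathit{TAttr}^{\mathcal{G},T}_\alpha(A)$ is the least $Z\supseteq A$ containing every $v\in V_\alpha$ with $E(v)\cap Z\neq\emptyset$, every $v\in V_{\overline{\alpha}}$ with $E(v)\subseteq Z$, and every vertex of every $t\in T_\alpha$ with $\emptyset\neq E_T(t)\subseteq Z$ ($E_T$ computed in $\mathcal{G}$). It is computed iteratively together with a strategy $\sigma$ of $\alpha$ (initially empty): when an $\alpha$-vertex is added individually, $\sigma$ maps it to a successor already in $Z$; each $\alpha$-vertex of $A$ gets as $\sigma$-value a successor in $Z$ once one exists; when the vertices of a tangle $t$ are added, $\sigma(u):=\sigma_T(t)(u)$ for every $\alpha$-vertex $u\in t$ not yet in $\mathrm{dom}(\sigma)$. extract-tangles$(Z,\sigma)$, for a subgame $\mathcal{G}'=(V',E')$ with top priority $p$, $\alpha\equiv p$, region $Z\subseteq V'$ and strategy $\sigma$: let $Y$ be the greatest $X\subseteq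 Z$ such that every $v\in X\cap V_{\overline{\alpha}}$ has $E'(v)\subseteq X$ and every $v\in X\cap V_\alpha$ has $\sigma(v)\in X$; let $H$ be the graph on $Y$ with edges $(v,\sigma(v))$ for $v\in Y\cap V_\alpha$ and $(v,w)\in E'$ for $v\in Y\cap V_{\overline{\alpha}}$; return all bottom strongly connected components of $H$ that contain at least one edge of $H$, each with witness strategy $\sigma$ restricted to it. $\mathtt{search}(\mathcal{G},T)$ (with $T$ a set of tangles of $\mathcal{G}$): repeat forever: set $r:=\emptyset$ (a partial function $V\to\mathbb{N}$, the region function) and $Y:=\emptyset$; while $V\setminus\mathrm{dom}(r)\neq\emptyset$: let $\mathcal{G}':=\mathcal{G}\setminus\mathrm{dom}(r)$ with vertex set $V'$, $T':=T\cap\mathcal{G}'$, $p:=\mathrm{pr}(\mathcal{G}')$, $\alpha:=p\bmod 2$; compute $(Z,\sigma):=\mathit{TAttr}^{\mathcal{G}',T'}_\alpha(\mathrm{pr}^{-1}(p)\cap V')$ (the region of priority $p$); let $A:=$ extract-tangles$(Z,\sigma)$; if some $t\in A$ has $E_T(t)=\emptyset$ with $E_T$ computed in the full game $\mathcal{G}$, return $(T\cup Y,t)$; otherwise set $r(v):=p$ for all $v\in Z$ and $Y:=Y\cup A$. After the while-loop, set $T:=T\cup Y$. *)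

From mathcomp Require Import all_boot.
Set Implicit Arguments.
Unset Strict Implicit.
Unset Printing Implicit Defensive.

Section ParityGames.
(* owner v = false : v in V_0 (Even);  owner v = true : v in V_1 (Odd).
   Player alpha is a bool: alpha = odd p means alpha == p mod 2.          *)
Variables (V : finType) (owner : V -> bool) (E : rel V) (pr : V -> nat).

Definition prmax (U : {set V}) : nat := \max_(u in U) pr u.

Definition strat := {ffun V -> option V}.
Definition strat0 : strat := [ffun => None].

(* a tangle candidate: its vertex set and its witness strategy sigma_T *)
Definition tangle := ({set V} * strat)%type.

Definition tparity (t : tangle) : bool := odd (prmax t.1).

(* the graph (U, E /\ (sigma \cup ((U /\ V_abar) x U))) *)
Definition tgraph (t : tangle) : rel V := fun u w =>
  [&& u \in t.1, w \in t.1 &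
      if owner u == tparity t then t.2 u == Some w else E u w].

Definition is_tangle (t : tangle) : Prop :=
  [/\ t.1 != set0,
      (forall u, u \in t.1 -> owner u = tparity t ->
         exists2 w, t.2 u = Some w & (w \in t.1) && E u w),
      (forall u w, u \in t.1 -> w \in t.1 -> connect (tgraph t) u w) &
      (forall c : seq V, c != [::] -> cycle (tgraph t) c ->
         odd (\max_(x <- c) pr x) = tparity t)].

(* E_T(t) computed in the subgame with vertex set S *)
Definition escapes (S : {set V}) (t : tangle) : {set V} :=
  [set v in S | (v \notin t.1) &&
     [exists u in t.1, (owner u != tparity t) && E u v]].

Definition upd (s : strat) (v w : V) : strat :=
  [ffun x => if x == v then Some w else s x].

Definition tupd (a : bool) (s : strat) (t : tangle) : strat :=
  [ffun x => if [&& x \in t.1, owner x == a & s x == None] then t.2 x else s x].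

(* one iteration step of TAttr^{S,T}_a(A); state = (Z, sigma) *)
Inductive attr_step (S : {set V}) (T : {set tangle}) (a : bool) (A : {set V}) :
  {set V} * strat -> {set V} * strat -> Prop :=
| AS_alpha (Z : {set V}) (s : strat) (v w : V) : v \in S -> v \notin Z -> owner v = a -> w \in Z -> E v w ->
    attr_step S T a A (Z, s) (v |: Z, upd s v w)
| AS_opp (Z : {set V}) (s : strat) (v : V) : v \in S -> v \notin Z -> owner v = ~~ a ->
    (forall w, w \in S -> E v w -> w \in Z) ->
    attr_step S T a A (Z, s) (v |: Z, s)
| AS_init (Z : {set V}) (s : strat) (v w : V) : v \in A -> owner v = a -> s v = None -> w \in Z -> E v w ->
    attr_step S T a A (Z, s) (Z, upd s v w)
| AS_tangle (Z : {set V}) (s : strat) (t : tangle) : t \in T -> tparity t = a ->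
    escapes S t != set0 -> escapes S t \subset Z -> ~~ (t.1 \subset Z) ->
    attr_step S T a A (Z, s) (Z :|: t.1, tupd a s t).

Inductive star (X : Type) (R : X -> X -> Prop) : X -> X -> Prop :=
| star_refl x : star R x x
| star_step x y z : R x y -> star R y z -> star R x z.

Definition attr_done (S : {set V}) (T : {set tangle}) (a : bool) (A : {set V})
    (Z : {set V}) (s : strat) : Prop :=
  [/\ (forall v w, v \in S -> v \notin Z -> owner v = a -> w \in Z -> ~~ E v w),
      (forall v, v \in S -> v \notin Z -> owner v = ~~ a ->
         exists w, [&& w \in S, E v w & w \notin Z]),
      (forall t, t \in T -> tparity t = a -> escapes S t != set0 ->
         escapes S t \subset Z -> t.1 \subset Z) &
      (forall v w, v \in A -> owner v = a -> w \in Z -> E v w -> s v != None)].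

(* (Z, s) is a possible result of computing TAttr^{G',T'}_a(A), G' = G cap S *)
Definition tattr (S : {set V}) (T : {set tangle}) (a : bool) (A : {set V})
    (Z : {set V}) (s : strat) : Prop :=
  star (attr_step S T a A) (A, strat0) (Z, s) /\ attr_done S T a A Z s.

Definition closedX (S : {set V}) (a : bool) (s : strat) (X : {set V}) : bool :=
  [forall v in X,
     if owner v == a then (if s v is Some w then w \in X else false)
     else [forall w in S, E v w ==> (w \in X)]].

Definition ext_region (S : {set V}) (a : bool) (Z : {set V}) (s : strat) : {set V} :=
  [set v | [exists X : {set V}, [&& X \subset Z, closedX S a s X & v \in X]]].

Definition hgraph (S : {set V}) (a : bool) (s : strat) (Y : {set V}) : rel V :=
  fun u w => [&& u \in Y, w \in Y &
     if owner u == a then s u == Some w else E u w && (w \in S)].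

(* t is a bottom SCC of H containing an edge, with witness s restricted to it *)
Definition extracted (S : {set V}) (a : bool) (Z : {set V}) (s : strat) (t : tangle) : bool :=
  let Y := ext_region S a Z s in
  let H := hgraph S a s Y in
  [exists u in Y,
     [&& t.1 == [set w | connect H u w],
         [forall w, connect H u w ==> connect H w u],
         [exists x in t.1, exists y in t.1, H x y] &
         t.2 == [ffun x => if x \in t.1 then s x else None]]].

Definition extract_tangles (S : {set V}) (a : bool) (Z : {set V}) (s : strat)
  : {set tangle} := [set t | extracted S a Z s t].

(* current subgame G' = G \ dom(r), given D = dom(r) *)
Definition curT (T : {set tangle}) (D : {set V}) : {set tangle} :=
  [set t in T | t.1 \subset ~: D].
Definition topp (D : {set V}) : nat := prmax (~: D).
Definition player (D : {set V}) : bool := odd (topp D).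
Definition topset (D : {set V}) : {set V} := [set v in ~: D | pr v == topp D].

(* state of search: (T, dom r, Y) *)
Definition sstate := ({set tangle} * {set V} * {set tangle})%type.

Inductive search_step : sstate -> sstate -> Prop :=
| SS_inner (T : {set tangle}) (D : {set V}) (Y : {set tangle}) (Z : {set V}) (s : strat) :
    D != setT ->
    tattr (~: D) (curT T D) (player D) (topset D) Z s ->
    (forall t, t \in extract_tangles (~: D) (player D) Z s -> escapes setT t != set0) ->
    search_step (T, D, Y) (T, D :|: Z, Y :|: extract_tangles (~: D) (player D) Z s)
| SS_outer (T Y : {set tangle}) :
    search_step (T, setT, Y) (T :|: Y, set0, set0).

Definition search_reach (T0 : {set tangle}) (st : sstate) : Prop :=
  star search_step (T0, set0, set0) st.

Definition cons_edge (Z : {set V}) (s : strat) : rel V := fun x y =>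
  [&& E x y, y \in Z & if s x is Some w then y == w else true].

End ParityGames.

From mathcomp Require Import all_boot.
Set Implicit Arguments.
Unset Strict Implicit.
Unset Printing Implicit Defensive.

(* The claim is an invariant of the attractor computation: every vertex of the region Z has a
   sigma-consistent path inside Z to the target set A = pr^-1(p) /\ V'. Adding an alpha-vertex
   whose strategy points into Z, or an opponent vertex all of whose moves lead into Z, keeps it
   (the opponent vertex has a move because G' has no dead ends). Attracting a tangle t keeps it
   too: t is strongly connected under its witness strategy, so every vertex of t reaches the
   opponent vertex of t that escapes into Z. The strategy only ever changes at vertices that are
   new or in A, so old paths survive.
   This needs the tangles of T' to be strongly connected with total witness strategies and G' to
   be free of dead ends, and search preserves both: extracted tangles are bottom SCCs of the
   sigma-graph of a closed subregion, and the complement of an attractor has no dead ends. *)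

Section Attraction.
Variables (V : finType) (owner : V -> bool) (E : rel V) (pr : V -> nat).

(* The part of [is_tangle] the attractor argument needs; unlike [is_tangle], it is
   established for extracted tangles without any analysis of their cycles. *)
Definition weak_tangle (t : tangle V) : Prop :=
  (forall u, u \in t.1 -> owner u = tparity pr t -> exists2 w, t.2 u = Some w & E u w) /\
  (forall u w, u \in t.1 -> w \in t.1 -> connect (tgraph owner E pr t) u w).

Lemma is_tangle_weak t : is_tangle owner E pr t -> weak_tangle t.
Proof.
case=> _ strat_t conn_t _; split=> // u ut ou.
by have [w tw /andP[_ euw]] := strat_t u ut ou; exists w.
Qed.

Definition total_on (S : {set V}) : Prop :=
  forall v, v \in S -> exists2 w, w \in S & E v w.

Inductive attracted (A Z : {set V}) (s : strat V) : V -> Prop :=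
| attracted_target x : x \in A -> attracted A Z s x
| attracted_step x y : cons_edge E Z s x y -> attracted A Z s y -> attracted A Z s x.

Lemma attracted_path (A Z : {set V}) (s : strat V) x :
  attracted A Z s x -> exists2 p, path (cons_edge E Z s) x p & last x p \in A.
Proof.
elim=> {x} [x xA | x y xy _ [p yp pA]]; first by exists [::].
by exists (y :: p); rewrite /= ?xy.
Qed.

Lemma attracted_mono (A Z Z' : {set V}) (s s' : strat V) x : Z \subset Z' ->
  (forall y, y \in Z -> y \notin A -> s' y = s y) ->
  x \in Z -> attracted A Z s x -> attracted A Z' s' x.
Proof.
move=> sZZ' ss' + attr_x; elim: attr_x => {x} [x xA | x y /and3P[xy yZ sx] _ IH] xZ.
  exact: attracted_target.
have [xA | xNA] := boolP (x \in A); first exact: attracted_target.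
apply: attracted_step (IH yZ).
by rewrite /cons_edge xy (subsetP sZZ') // ss'.
Qed.

Lemma attracted_connect (e : rel V) (A Z C : {set V}) (s : strat V) x y :
  (forall z, z \in C -> attracted A Z s z) ->
  (forall x' y', x' \notin C -> e x' y' -> cons_edge E Z s x' y') ->
  connect e x y -> attracted A Z s y -> attracted A Z s x.
Proof.
move=> attrC edge /connectP[p + ->]; elim: p x => [|z p IH] x //= /andP[xz zp] attr_y.
have [xC | xNC] := boolP (x \in C); first exact: attrC.
exact: attracted_step (edge _ _ xNC xz) (IH _ zp attr_y).
Qed.

Section Attractor.
Variables (S : {set V}) (T : {set tangle V}) (a : bool) (A : {set V}).
Hypothesis A_sub : A \subset S.
Hypothesis T_weak : forall t, t \in T -> weak_tangle t /\ t.1 \subset S.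
Hypothesis S_total : total_on S.

Record attr_inv (Z : {set V}) (s : strat V) : Prop := AttrInv {
  target_sub : A \subset Z;
  region_sub : Z \subset S;
  strat_dom : forall x, x \notin Z -> s x = None;
  strat_edge : forall x w, s x = Some w -> E x w;
  strat_target : forall x, x \in Z -> owner x = a -> s x = None -> x \in A;
  region_attracted : forall x, x \in Z -> attracted A Z s x }.

Lemma attr_inv0 : attr_inv A (strat0 V).
Proof. by split=> // [x|x w|x]; rewrite ?ffunE //; apply: attracted_target. Qed.

Lemma attr_inv_alpha (Z : {set V}) (s : strat V) v w :
  v \in S -> v \notin Z -> w \in Z -> E v w -> attr_inv Z s -> attr_inv (v |: Z) (upd s v w).
Proof.
move=> vS vNZ wZ vw [AZ ZS s_dom s_edge s_target Z_attr].
have updE x : upd s v w x = if x == v then Some w else s x by rewrite ffunE.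
have agree y : y \in Z -> y \notin A -> upd s v w y = s y.
  by move=> yZ _; rewrite updE; case: eqP yZ => // ->; rewrite (negbTE vNZ).
have ZvZ := subsetU1 v Z.
have Z'_attr x : x \in Z -> attracted A (v |: Z) (upd s v w) x.
  by move=> xZ; apply: attracted_mono agree xZ (Z_attr x xZ).
split=> [||x|x w'|x|x].
- exact: subset_trans ZvZ.
- by rewrite subUset sub1set vS.
- by rewrite in_setU1 negb_or updE => /andP[/negbTE -> /s_dom].
- by rewrite updE; case: eqP => [-> [<-] | _ /s_edge].
- by rewrite in_setU1 updE; case: eqP => //= _; apply: s_target.
- rewrite in_setU1 => /predU1P[-> | /Z'_attr //].
  apply: attracted_step (Z'_attr w wZ).
  by rewrite /cons_edge vw setU1r // updE eqxx /=.
Qed.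

Lemma attr_inv_opp (Z : {set V}) (s : strat V) v :
  v \in S -> v \notin Z -> owner v = ~~ a -> (forall w, w \in S -> E v w -> w \in Z) ->
  attr_inv Z s -> attr_inv (v |: Z) s.
Proof.
move=> vS vNZ ov vZ [AZ ZS s_dom s_edge s_target Z_attr].
have ZvZ := subsetU1 v Z.
have Z'_attr x : x \in Z -> attracted A (v |: Z) s x.
  by move=> xZ; apply: attracted_mono ZvZ _ xZ (Z_attr x xZ).
split=> // [||x|x|x].
- exact: subset_trans ZvZ.
- by rewrite subUset sub1set vS.
- by rewrite in_setU1 negb_or => /andP[_ /s_dom].
- rewrite in_setU1 => /predU1P[-> | xZ]; last exact: s_target.
  by rewrite ov; case: a.
- rewrite in_setU1 => /predU1P[-> | /Z'_attr //].
  have [w wS vw] := S_total vS.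
  apply: attracted_step (Z'_attr w (vZ w wS vw)).
  by rewrite /cons_edge vw setU1r ?vZ // s_dom.
Qed.

Lemma attr_inv_init (Z : {set V}) (s : strat V) v w :
  v \in A -> E v w -> attr_inv Z s -> attr_inv Z (upd s v w).
Proof.
move=> vA vw [AZ ZS s_dom s_edge s_target Z_attr].
have updE x : upd s v w x = if x == v then Some w else s x by rewrite ffunE.
have agree y : y \in Z -> y \notin A -> upd s v w y = s y.
  by move=> _; rewrite updE; case: eqP => // ->; rewrite vA.
split=> // [x|x w'|x|x].
- by rewrite updE; case: eqP => [-> | _ /s_dom //]; rewrite (subsetP AZ _ vA).
- by rewrite updE; case: eqP => [-> [<-] | _ /s_edge].
- by rewrite updE; case: eqP => [-> | _]; [rewrite vA | apply: s_target].
- by move=> xZ; apply: attracted_mono agree xZ (Z_attr x xZ).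
Qed.

Lemma attr_inv_tangle (Z : {set V}) (s : strat V) t :
  t \in T -> tparity pr t = a ->
  escapes owner E pr S t != set0 -> escapes owner E pr S t \subset Z ->
  attr_inv Z s -> attr_inv (Z :|: t.1) (tupd owner a s t).
Proof.
move=> tT ta /set0Pn[e esc_e] escZ [AZ ZS s_dom s_edge s_target Z_attr].
have [[t_strat t_conn] tS] := T_weak tT.
set s' := tupd owner a s t.
have s'E x : s' x = if [&& x \in t.1, owner x == a & s x == None] then t.2 x else s x.
  by rewrite ffunE.
have t_edge x : x \in t.1 -> owner x = a -> exists2 w, t.2 x = Some w & E x w.
  by rewrite -ta; apply: t_strat.
have ZZ' := subsetUl Z t.1.
have agree y : y \in Z -> y \notin A -> s' y = s y.
  move=> yZ yNA; rewrite s'E; case: and3P => // -[_ /eqP oy /eqP sy].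
  by rewrite s_target in yNA.
have t_cons x y : x \notin Z -> tgraph owner E pr t x y -> cons_edge E (Z :|: t.1) s' x y.
  move=> xNZ /and3P[xt yt]; rewrite ta /cons_edge s'E xt s_dom // eqxx in_setU yt orbT /=.
  case: eqP => [ox /eqP tx | _ xy]; last by rewrite xy.
  have [w tw xw] := t_edge x xt ox; rewrite tx in tw; case: tw xw => <-.
  by rewrite tx /= eqxx andbT.
split=> [||x|x w|x|x].
- exact: subset_trans ZZ'.
- by rewrite subUset ZS.
- by rewrite in_setU negb_or s'E => /andP[/s_dom -> /negbTE ->].
- rewrite s'E; case: and3P => [[xt /eqP ox _] | _ /s_edge //].
  by have [w' -> xw'] := t_edge x xt ox => -[<-].
- rewrite in_setU => xZt ox; case sx: (s x) => [w|]; rewrite s'E sx ?andbF //.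
  rewrite ox !eqxx /= andbT; case: ifP => [xt | xNt _].
    by have [w -> ] := t_edge x xt ox.
  by apply: s_target ox sx; rewrite xNt orbF in xZt.
have Z'_attr z : z \in Z -> attracted A (Z :|: t.1) s' z.
  by move=> zZ; apply: attracted_mono agree zZ (Z_attr z zZ).
have eZ := subsetP escZ e esc_e.
move: esc_e; rewrite inE => /and3P[_ _ /existsP[u /and3P[ut ou ue]]].
have u_attr : attracted A (Z :|: t.1) s' u.
  have [uZ | uNZ] := boolP (u \in Z); first exact: Z'_attr.
  apply: attracted_step (Z'_attr e eZ).
  by rewrite /cons_edge ue in_setU eZ s'E ut -ta (negbTE ou) /= s_dom.
rewrite in_setU => /orP[xZ | xt]; first exact: Z'_attr.
exact: attracted_connect Z'_attr t_cons (t_conn x u xt ut) u_attr.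
Qed.

Lemma attr_inv_step st st' : attr_step owner E pr S T a A st st' ->
  attr_inv st.1 st.2 -> attr_inv st'.1 st'.2.
Proof.
case=> /= *;
  [exact: attr_inv_alpha | exact: attr_inv_opp | exact: attr_inv_init | exact: attr_inv_tangle].
Qed.

Lemma attr_inv_star st st' : star (attr_step owner E pr S T a A) st st' ->
  attr_inv st.1 st.2 -> attr_inv st'.1 st'.2.
Proof. by elim=> // x y z /attr_inv_step xy _ IH /xy/IH. Qed.

End Attractor.

Lemma attr_done_total S T a A Z s :
  total_on S -> attr_done owner E pr S T a A Z s -> total_on (S :\: Z).
Proof.
move=> S_total [alpha_out opp_out _ _] v /setDP[vS vNZ].
have [/eqP ov | ov] := boolP (owner v == a).
  have [w wS vw] := S_total v vS; exists w => //.
  by rewrite inE wS andbT; apply: contraL vw => wZ; apply: alpha_out.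
have ov' : owner v = ~~ a by move: ov; rewrite negb_eqb => /addbP <-; rewrite negbK.
by have [w /and3P[wS vw wNZ]] := opp_out v vS vNZ ov'; exists w; rewrite // inE wNZ.
Qed.

Section ExtractTangles.
Variables (S : {set V}) (a : bool) (A : {set V}) (k : nat).
Hypothesis a_k : a = odd k.
Hypothesis S_le : forall x, x \in S -> pr x <= k.
Hypothesis A_k : forall x, x \in A -> pr x = k.
Variables (Z : {set V}) (s : strat V).
Hypothesis Z_sub : Z \subset S.
Hypothesis s_edge : forall x w, s x = Some w -> E x w.
Hypothesis Z_attr : forall x, x \in Z -> attracted A Z s x.

Let Y := ext_region owner E S a Z s.
Let H := hgraph owner E S a s Y.

Lemma ext_region_sub : Y \subset Z.
Proof. by apply/subsetP => v; rewrite inE => /existsP[X /and3P[/subsetP XZ _ /XZ]]. Qed.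

Lemma closedX_ext_region : closedX owner E S a s Y.
Proof.
apply/forall_inP => v; rewrite inE => /existsP[X /and3P[XZ Xcl vX]].
have XY w : w \in X -> w \in Y.
  by move=> wX; rewrite inE; apply/existsP; exists X; rewrite XZ Xcl wX.
move/forall_inP/(_ v vX): Xcl; case: (owner v == a); first by case: (s v) => // w /XY.
by move=> /forall_inP cl; apply/forall_inP => w wS; apply/implyP => /(implyP (cl w wS))/XY.
Qed.

Lemma hgraph_attracted x : attracted A Z s x -> x \in Y -> exists2 z, z \in A & connect H x z.
Proof.
elim=> {x} [x xA _ | x y /and3P[xy yZ sx] _ IH xY]; first by exists x.
have Hxy : H x y.
  move/forall_inP/(_ x xY): closedX_ext_region; rewrite /H /hgraph xY /=.
  case: (owner x == a) => [| /forall_inP cl].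
    by case: (s x) sx => // w /eqP -> ->; rewrite eqxx.
  by have yS := subsetP Z_sub y yZ; rewrite xy yS (implyP (cl y yS) xy).
have yY : y \in Y by case/and3P: Hxy.
have [z zA yz] := IH yY.
by exists z; last exact: connect_trans (connect1 Hxy) yz.
Qed.

Lemma extracted_weak_tangle t : t \in extract_tangles owner E S a Z s -> weak_tangle t.
Proof.
rewrite inE => /existsP[u /andP[uY /and4P[/eqP t1 /forallP bottom _ /eqP t2]]].
have t1E x : (x \in t.1) = connect H u x by rewrite t1 inE.
have t_back x : x \in t.1 -> connect H x u by rewrite t1E => /(implyP (bottom x)).
have tY x : x \in t.1 -> x \in Y.
  rewrite t1E => /connectP[p + ->]; elim: p u uY {t1E t_back bottom t1} => //= w p IH u' _.
  by case/andP => /and3P[_ wY _]; apply: IH.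
have [z zA uz] := hgraph_attracted (Z_attr (subsetP ext_region_sub u uY)) uY.
have t_k : prmax pr t.1 = k.
  apply/eqP; rewrite eqn_leq; apply/andP; split.
    by apply/bigmax_leqP => x /tY/(subsetP ext_region_sub)/(subsetP Z_sub)/S_le.
  by rewrite -(A_k zA); apply: leq_bigmax_cond; rewrite t1E.
have ta : tparity pr t = a by rewrite /tparity t_k a_k.
have H_t : {in t.1 &, subrel H (tgraph owner E pr t)}.
  move=> x y xt yt /and3P[_ _]; rewrite /tgraph xt yt ta t2 ffunE xt /=.
  by case: (owner x == a) => // /andP[].
split=> [x xt | x y xt yt].
  move/forall_inP/(_ x (tY x xt)): closedX_ext_region; rewrite ta => + ox; rewrite ox eqxx.
  by rewrite t2 ffunE xt; case sx: (s x) => [w|] // _; exists w => //; apply: s_edge.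
have /connectP[p xp ->] : connect H x y by rewrite (connect_trans (t_back x xt)) -?t1E.
apply/connectP; exists p => //; apply: (sub_in_path H_t _ xp).
apply/allP => w /(path_connect xp) xw.
suff : w \in t.1 by [].
by rewrite t1E (connect_trans _ xw) // -t1E.
Qed.

End ExtractTangles.

Hypothesis E_total : forall v, exists w, E v w.

Lemma total_on_setC0 : total_on (~: set0).
Proof. by move=> v _; have [w vw] := E_total v; exists w; rewrite ?inE. Qed.

Definition search_inv (st : sstate V) : Prop :=
  let: (T, D, Y) := st in
  [/\ forall t, t \in T -> weak_tangle t,
      forall t, t \in Y -> weak_tangle t &
      total_on (~: D)].

Lemma search_attr_inv (T : {set tangle V}) (D Z : {set V}) (s : strat V) :
  (forall t, t \in T -> weak_tangle t) -> total_on (~: D) ->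
  tattr owner E pr (~: D) (curT T D) (player pr D) (topset pr D) Z s ->
  attr_inv (~: D) (player pr D) (topset pr D) Z s.
Proof.
move=> T_weak D_total [run _].
have top_sub : topset pr D \subset ~: D by apply/subsetP => x /setIdP[].
have curT_weak t : t \in curT T D -> weak_tangle t /\ t.1 \subset ~: D.
  by rewrite inE => /andP[/T_weak].
exact: attr_inv_star curT_weak D_total _ _ run (attr_inv0 _ top_sub).
Qed.

Lemma search_inv_step st st' : search_step owner E pr st st' -> search_inv st -> search_inv st'.
Proof.
case=> [T D Y Z s _ att _ | T Y] [T_weak Y_weak D_total]; last first.
  by split=> [t /setUP[/T_weak | /Y_weak] | t | ] //; [rewrite inE | apply: total_on_setC0].
have [_ ZS _ s_edge _ Z_attr] := search_attr_inv T_weak D_total att.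
split=> // [t /setUP[/Y_weak // | ext_t] |].
  apply: (extracted_weak_tangle (A := topset pr D)) ext_t => // [x xD | x /setIdP[_ /eqP //]].
  exact: leq_bigmax_cond.
by rewrite setCU -setDE; apply: attr_done_total D_total att.2.
Qed.

Lemma search_reach_inv (T0 : {set tangle V}) (st : sstate V) :
  (forall t, t \in T0 -> is_tangle owner E pr t) ->
  search_reach owner E pr T0 st -> search_inv st.
Proof.
move=> T0_tangle run; have : search_inv (T0, set0, set0).
  by split=> [t /T0_tangle/is_tangle_weak | t | ] //; [rewrite inE | apply: total_on_setC0].
by elim: run => // x y z /search_inv_step xy _ IH /xy/IH.
Qed.

End Attraction.

Theorem lemma3 (V : finType) (owner : V -> bool) (E : rel V) (pr : V -> nat)
  (Htotal : forall v : V, exists w, E v w)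
  (T0 : {set tangle V})
  (HT0 : forall t, t \in T0 -> is_tangle owner E pr t)
  (T : {set tangle V}) (D : {set V}) (Y : {set tangle V})
  (Z : {set V}) (s : strat V) :
  search_reach owner E pr T0 (T, D, Y) ->
  D != setT ->
  tattr owner E pr (~: D) (curT T D) (player pr D) (topset pr D) Z s ->
  forall v, v \in Z ->
    exists p : seq V, path (cons_edge E Z s) v p /\ pr (last v p) = topp pr D.
Proof.
move=> run _ att v vZ.
have [T_weak _ D_total] := search_reach_inv Htotal HT0 run.
have inv := search_attr_inv T_weak D_total att.
have [p vp /setIdP[_ /eqP top]] := attracted_path (region_attracted inv vZ).
by exists p.
Qed.
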